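(* Let $d,\tilde d\in\ell^\infty(\mathbb{Z})$ be limit-periodic potentials with frequency integer sets $S_d$ and $S_{\tilde d}$ respectively. Then $\Omega_d\cong\Omega_{\tilde d}$ (as topological groups) if and only if for every $n\in S_d$ there exists $m\in S_{\tilde d}$ with $n\mid m$, and for every $m\in S_{\tilde d}$ there exists $n\in S_d$ with $m\mid n$.
   Context: $\ell^\infty(\mathbb{Z})$ carries the sup norm; $\sigma$ is the left shift, $(\sigma d)_n=d_{n+1}$. For $d\in\ell^\infty(\mathbb{Z})$, $\mathrm{orb}(d)=\{\sigma^k d: k\in\mathbb{Z}\}$ and $\Omega_d=\mathrm{hull}(d)$ is the closure of $\mathrm{orb}(d)$ in $\ell^\infty(\mathbb{Z})$. A potential $p$ is periodic if $\mathrm{orb}(p)$ is finite; $d$ is limit-periodic if it lies in the $\ell^\infty$-closure of the set of periodic potentials. For limit-periodic $d$, $\Omega_d$ is compact and carries a unique topological group structure (which is abelian) with identity $d$ such that $k\mapsto\sigma^k(d)$ is a group homomorphism $\mathbb{Z}\to\Omega_d$; isomorphisms of hulls refer to this structure. The frequency module $F_d\subset\mathbb{R}$ is the set of $\alpha\in\mathbb{R}$ such that $\sigma^k(d)\mapsto e^{ik\alpha}$ extends to a continuous character of $\Omega_d$ (equivalently, the $\mathbb{Z}$-module generated by those $\alpha$ with $\lim_{n\to\infty}\frac1{2n}\sum_{k=-n}^n d(k)e^{-ik\alpha}\neq0$). A frequency integer set of $d$ is a set $S=\{n_j\}$ of positive integers with $n_j\mid n_{j+1}$ for all $j$ such that $F_d$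 is the $\mathbb{Z}$-module generated by $\{2\pi/n_j: n_j\in S\}$. *)

From mathcomp Require Import all_boot all_order all_algebra.
From mathcomp Require Import all_classical all_reals all_analysis.
Set Implicit Arguments. Unset Strict Implicit. Unset Printing Implicit Defensive.
Import Order.TTheory GRing.Theory Num.Theory.
Local Open Scope ring_scope.
Local Open Scope classical_set_scope.

Section LimitPeriodic.
Variable R : realType.

Definition pot := int -> R.

Definition bounded_pot (x : pot) : Prop := exists M : R, forall n, `|x n| <= M.

Definition shift (k : int) (x : pot) : pot := fun n => x (n + k).

Definition orb (x : pot) : set pot := [set shift k x | k in [set: int]].

Definition supdist_lt (x y : pot) (e : R) : Prop :=
  exists2 r : R, r < e & forall n, `|x n - y n| <= r.

Definition periodic (p : pot) : Prop := finite_set (orb p).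

Definition limit_periodic (d : pot) : Prop :=
  bounded_pot d /\
  forall e : R, 0 < e -> exists2 p : pot, periodic p & supdist_lt d p e.

Definition hull (d : pot) : set pot :=
  [set x | bounded_pot x /\
           forall e : R, 0 < e -> exists2 y, orb d y & supdist_lt x y e].

Definition cont_on_to (A B : set pot) (f : pot -> pot) : Prop :=
  forall x, A x -> forall e : R, 0 < e -> exists2 dl : R, 0 < dl &
    forall y, A y -> supdist_lt x y dl -> supdist_lt (f x) (f y) e.

Definition cont2_on (A B : set pot) (f : pot -> pot -> pot) : Prop :=
  forall x y, A x -> A y -> forall e : R, 0 < e -> exists2 dl : R, 0 < dl &
    forall x' y', A x' -> A y' -> supdist_lt x x' dl -> supdist_lt y y' dl ->
      supdist_lt (f x y) (f x' y') e.

Definition cont_real_on (A : set pot) (f : pot -> R) : Prop :=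
  forall x, A x -> forall e : R, 0 < e -> exists2 dl : R, 0 < dl &
    forall y, A y -> supdist_lt x y dl -> `|f x - f y| < e.

Definition hull_group (d : pot) (mul : pot -> pot -> pot) (inv : pot -> pot)
  : Prop :=
  let H := hull d in
  (forall x y, H x -> H y -> H (mul x y)) /\
  (forall x, H x -> H (inv x)) /\
  (forall x y z, H x -> H y -> H z -> mul x (mul y z) = mul (mul x y) z) /\
  (forall x, H x -> mul d x = x /\ mul x d = x) /\
  (forall x, H x -> mul (inv x) x = d /\ mul x (inv x) = d) /\
  (forall j k : int, mul (shift j d) (shift k d) = shift (j + k) d) /\
  cont2_on H H mul /\
  cont_on_to H H inv.

Definition hull_iso (d d' : pot) : Prop :=
  exists mul inv mul' inv' (f g : pot -> pot),
    hull_group d mul inv /\ hull_group d' mul' inv' /\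
    (forall x, hull d x -> hull d' (f x)) /\
    (forall y, hull d' y -> hull d (g y)) /\
    (forall x, hull d x -> g (f x) = x) /\
    (forall y, hull d' y -> f (g y) = y) /\
    cont_on_to (hull d) (hull d') f /\
    cont_on_to (hull d') (hull d) g /\
    (forall x y, hull d x -> hull d y -> f (mul x y) = mul' (f x) (f y)).

(* alpha is in the frequency module: sigma^k d |-> e^{i k alpha} extends to a
   continuous character chi = c + i s of hull d *)
Definition freq_module (d : pot) (alpha : R) : Prop :=
  exists mul inv (c s : pot -> R),
    [/\ hull_group d mul inv,
        cont_real_on (hull d) c, cont_real_on (hull d) s,
        (forall x y, hull d x -> hull d y ->
           c (mul x y) = c x * c y - s x * s y /\
           s (mul x y) = s x * c y + c x * s y) &
        (forall k : int, c (shift k d) = cos (k%:~R * alpha) /\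
                         s (shift k d) = sin (k%:~R * alpha))].

Definition zspan_2pi_over (n : nat -> nat) (alpha : R) : Prop :=
  exists s : seq (int * nat),
    alpha = \sum_(p <- s) p.1%:~R * (2 * pi / (n p.2)%:R).

Definition freq_int_set (d : pot) (n : nat -> nat) : Prop :=
  [/\ forall j, (0 < n j)%N,
      forall j, (n j %| n j.+1)%N &
      forall alpha : R, freq_module d alpha <-> zspan_2pi_over n alpha].

End LimitPeriodic.

(* For a limit-periodic [d] with frequency integers [n], the shift [sh k d] is
   close to [d] exactly when [k] is divisible by a large [n j]: the character of
   frequency 2 pi / n j separates the other residues, and approximating [d] by a
   periodic potential forces closeness along a subgroup rZ of Z whose residue map
   onto Z/rZ is again a character, so that r divides some [n j].  Consequently a
   continuous homomorphism from the hull onto Z/MZ is a character of frequency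
   2 pi u / M with u a unit mod M, which exists only when M divides some [n j];
   transporting these along an isomorphism of hulls gives the divisibility
   conditions.  Conversely, under mutual divisibility the map [sh k d |-> sh k d']
   is uniformly continuous in both directions, and its continuous extension to the
   hulls is an isomorphism. *)

From Pilot Require Import Defs.
From mathcomp Require Import all_boot all_order all_algebra.
From mathcomp Require Import all_classical all_reals all_analysis.
From mathcomp Require Import ring lra zify.
Set Implicit Arguments. Unset Strict Implicit. Unset Printing Implicit Defensive.
Import Order.TTheory GRing.Theory Num.Theory.
Local Open Scope ring_scope.
Local Notation sh := Defs.shift.

Section SupDist.
Variable R : realType.
Implicit Types (x y z d : pot R) (e : R).

Lemma supdist_sym x y e : supdist_lt x y e -> supdist_lt y x e.
Proof. by case=> r re H; exists r => // n; rewrite distrC. Qed.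

Lemma supdist_trans x y z e1 e2 : supdist_lt x y e1 -> supdist_lt y z e2 ->
  supdist_lt x z (e1 + e2).
Proof.
case=> r1 h1 H1 [r2 h2 H2]; exists (r1 + r2); first exact: ltrD.
by move=> n; apply: le_trans (ler_distD (y n) _ _) _; exact: lerD.
Qed.

Lemma supdist_half_trans x y z e : supdist_lt x y (e / 2) ->
  supdist_lt y z (e / 2) -> supdist_lt x z e.
Proof. by move=> H1 H2; have := supdist_trans H1 H2; rewrite -splitr. Qed.

Lemma supdist_le x y e e' : supdist_lt x y e -> e <= e' -> supdist_lt x y e'.
Proof. by case=> r h H le; exists r => //; exact: lt_le_trans le. Qed.

Lemma supdist_minl x y e e' : supdist_lt x y (Num.min e e') -> supdist_lt x y e.
Proof. by move/supdist_le; apply; rewrite ge_min lexx. Qed.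

Lemma supdist_minr x y e e' : supdist_lt x y (Num.min e e') -> supdist_lt x y e'.
Proof. by move/supdist_le; apply; rewrite ge_min lexx orbT. Qed.

Lemma supdist_refl x e : 0 < e -> supdist_lt x x e.
Proof. by move=> e0; exists 0 => // n; rewrite subrr normr0. Qed.

Lemma supdist_open x y e : supdist_lt x y e ->
  exists2 e', e' < e & supdist_lt x y e'.
Proof.
case=> r h H; exists ((r + e) / 2); first by rewrite ltr_pdivrMr // mulrDr mulr1 ltrD2r.
by exists r => //; rewrite ltr_pdivlMr // mulrDr mulr1 ltrD2l.
Qed.

Lemma supdist_eq x y : (forall e, 0 < e -> supdist_lt x y e) -> x = y.
Proof.
move=> H; apply: funext => n; apply/eqP; rewrite -subr_eq0 -normr_le0.
rewrite leNgt; apply/negP => t0; case: (H _ t0) => r rt Hr.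
by have := Hr n; rewrite leNgt rt.
Qed.

Lemma shift0 x : sh 0 x = x.
Proof. by apply: funext => n; rewrite /sh addr0. Qed.

Lemma shiftD (a b : int) x : sh a (sh b x) = sh (a + b) x.
Proof. by apply: funext => n; rewrite /sh addrA. Qed.

Lemma supdist_shift (a : int) x y e :
  supdist_lt (sh a x) (sh a y) e <-> supdist_lt x y e.
Proof.
have H b x' y' : supdist_lt x' y' e -> supdist_lt (sh b x') (sh b y') e.
  by case=> r h Hr; exists r => // n; exact: Hr.
split; last exact: H.
by move/(H (- a)); rewrite !shiftD addNr !shift0.
Qed.

Lemma supdist_shifts d (a b : int) e :
  supdist_lt (sh a d) (sh b d) e <-> supdist_lt d (sh (b - a) d) e.
Proof. by rewrite -(supdist_shift (- a)) !shiftD addNr shift0 addrC. Qed.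

Lemma hull_shift d (k : int) : bounded_pot d -> hull d (sh k d).
Proof.
move=> [M HM]; split; first by exists M => n; exact: HM.
by move=> e e0; exists (sh k d); [exists k | exact: supdist_refl].
Qed.

Lemma hull_self d : bounded_pot d -> hull d d.
Proof. by move=> bd; rewrite -{2}(shift0 d); exact: hull_shift. Qed.

Lemma hull_approx d x e : hull d x -> 0 < e -> exists k, supdist_lt x (sh k d) e.
Proof. by case=> _ H /H [y [k _ <-]]; exists k. Qed.

Lemma uniform_pos_radius (q : nat) (P : nat -> R -> Prop) :
  (forall i e e', P i e -> 0 < e' -> e' <= e -> P i e') ->
  (forall i, (i < q)%N -> exists2 e, 0 < e & P i e) ->
  exists2 e, 0 < e & forall i, (i < q)%N -> P i e.
Proof.
move=> mono; elim: q => [|q IH] H; first by exists 1.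
case: IH => [i iq|e e0 He]; first by apply: H; exact: ltnW.
case: (H q (ltnSn q)) => e' e'0 He'.
have m0 : 0 < Num.min e e' by rewrite lt_min e0.
exists (Num.min e e') => // i; rewrite ltnS leq_eqVlt => /orP[/eqP->|iq].
  by apply: mono He' _ _; rewrite ?ge_min ?lexx ?orbT.
by apply: mono (He i iq) _ _; rewrite ?ge_min ?lexx.
Qed.

End SupDist.

Section Trigonometry.
Context {R : realType}.

Lemma cos_sin_add_2piZ (t : int) (x : R) :
  cos (x + 2 * pi * t%:~R) = cos x /\ sin (x + 2 * pi * t%:~R) = sin x.
Proof.
have nat_case (m : nat) (y : R) :
    cos (y + 2 * pi * m%:R) = cos y /\ sin (y + 2 * pi * m%:R) = sin y.
  have -> : 2 * pi * m%:R = (pi *+ 2) *+ m :> R.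
    by rewrite -[pi *+ 2 *+ m]mulr_natr -[pi *+ 2]mulr_natr; ring.
  by split; apply: periodicn; [exact: cosD2pi | exact: sinD2pi].
case: t => m; first exact: nat_case.
set y := x + _; have -> : x = y + 2 * pi * (m.+1)%:R.
  by rewrite /y NegzE intrN -[((m.+1)%:Z)%:~R]/((m.+1)%:R : R); ring.
by case: (nat_case m.+1 y) => -> ->.
Qed.

Lemma cos_sin_2pi_div_mod (r : nat) (u v : int) : (0 < r)%N -> (r%:Z %| u - v)%Z ->
  cos (2 * pi * u%:~R / r%:R) = cos (2 * pi * v%:~R / r%:R) :> R /\
  sin (2 * pi * u%:~R / r%:R) = sin (2 * pi * v%:~R / r%:R) :> R.
Proof.
move=> r0 /dvdzP [t Ht]; have -> : u = v + t * r%:Z by rewrite -Ht addrC subrK.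
have r0' : (r%:R : R) != 0 by rewrite pnatr_eq0 -lt0n.
have -> : 2 * pi * (v + t * r%:Z)%:~R / r%:R =
    2 * pi * v%:~R / r%:R + 2 * pi * t%:~R :> R.
  by rewrite intrD intrM /= -[(r%:Z)%:~R]/(r%:R : R); field.
exact: cos_sin_add_2piZ.
Qed.

Lemma cos_2pi_div_lt1 (M : nat) : (1 < M)%N -> cos (2 * pi / M%:R) < 1 :> R.
Proof.
move=> M1; have pi0 := @pi_gt0 R; have MR : (2 : R) <= M%:R by rewrite ler_nat.
have M0 : (0 : R) < M%:R by apply: lt_le_trans MR.
have in1 : (2 * pi / M%:R : R) \in `[0, pi].
  rewrite in_itv /= ler_pdivrMr // andbC; apply/andP; split; first nra.
  by rewrite divr_ge0 ?mulr_ge0 ?ltW.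
have in0 : (0 : R) \in `[0, pi] by rewrite in_itv /= lexx ltW.
by rewrite -[X in _ < X]cos0 (ltr_cos in0 in1) divr_gt0 // mulr_gt0.
Qed.

Lemma cos_2pi_frac_le (M i : nat) : (1 < M)%N -> (1 <= i)%N -> (i.*2 <= M)%N ->
  cos (2 * pi * i%:R / M%:R) <= cos (2 * pi / M%:R) :> R.
Proof.
move=> M1 i1 i2; have pi0 := @pi_gt0 R.
have M2 : (2 : R) <= M%:R by rewrite ler_nat.
have MR : (0 : R) < M%:R by apply: lt_le_trans M2.
have iR : (1 : R) <= i%:R by rewrite ler1n.
have i2R : (i%:R * 2%:R : R) <= M%:R by rewrite -natrM ler_nat muln2.
have in1 : (2 * pi * i%:R / M%:R : R) \in `[0, pi].
  rewrite in_itv /= ler_pdivrMr // andbC; apply/andP; split; first nra.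
  by apply: divr_ge0 (ltW MR); nra.
have in2 : (2 * pi / M%:R : R) \in `[0, pi].
  rewrite in_itv /= ler_pdivrMr // andbC; apply/andP; split; first nra.
  by apply: divr_ge0 (ltW MR); lra.
by rewrite leNgt (ltr_cos in1 in2) -leNgt ler_pM2r ?invr_gt0 //; nra.
Qed.

Lemma cos_2pi_mul_le (M : nat) (k : int) : (1 < M)%N -> ~~ (M%:Z %| k)%Z ->
  cos (k%:~R * (2 * pi / M%:R)) <= cos (2 * pi / M%:R) :> R.
Proof.
move=> M1 nMk; have M0 : (0 < M)%N by apply: ltn_trans M1.
have Mz : M%:Z != 0 by rewrite eqz_nat -lt0n.
have := modz_ge0 k Mz; have := ltz_pmod k (M0 : (0 < M%:Z)).
have jn0 : (k %% M%:Z)%Z != 0 by apply: contra nMk => /eqP/dvdz_mod0P.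
case Ej : (k %% M%:Z)%Z jn0 => [j|] // jn0 jM _.
have -> : k%:~R * (2 * pi / M%:R) =
    2 * pi * j%:R / M%:R + 2 * pi * ((k %/ M%:Z)%Z)%:~R :> R.
  rewrite {1}(divz_eq k M%:Z) Ej intrD intrM /= -[(M%:Z)%:~R]/(M%:R : R).
  by rewrite -[(j%:Z)%:~R]/(j%:R : R); field; rewrite pnatr_eq0 -lt0n.
rewrite (cos_sin_add_2piZ _ _).1; rewrite ltz_nat in jM.
have j0 : (0 < j)%N by rewrite lt0n; move: jn0; rewrite eqz_nat.
have [h|h] := leqP j.*2 M; first exact: cos_2pi_frac_le.
have -> : 2 * pi * j%:R / M%:R =
    - (2 * pi * (M - j)%:R / M%:R) + 2 * pi * 1%:~R :> R.
  by rewrite natrB ?(ltnW jM) //; field; rewrite pnatr_eq0 -lt0n.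
rewrite (cos_sin_add_2piZ 1 _).1 cosN; apply: cos_2pi_frac_le; rewrite ?subn_gt0 //.
by move: h jM; rewrite -!muln2; lia.
Qed.

End Trigonometry.

Section HullGroup.
Variables (R : realType) (d : pot R) (mul : pot R -> pot R -> pot R) (inv : pot R -> pot R).
Hypothesis hg : hull_group d mul inv.

Lemma hull_group_closed x y : hull d x -> hull d y -> hull d (mul x y).
Proof. by case: hg => H _; exact: H. Qed.

Lemma hull_group_shiftD (j k : int) : mul (sh j d) (sh k d) = sh (j + k) d.
Proof. by case: hg => _ [_ [_ [_ [_ [H _]]]]]. Qed.

Lemma hull_group_cont : cont2_on (hull d) (hull d) mul.
Proof. by case: hg => _ [_ [_ [_ [_ [_ [H _]]]]]]. Qed.

End HullGroup.

(* The group structure on the hull comes packaged with the trivial character. *)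
Lemma hull_group_of_freq_int_set (R : realType) (d : pot R) (n : nat -> nat) :
  freq_int_set d n -> exists mul inv, hull_group d mul inv.
Proof.
case=> _ _ fr; have [|mul [inv [c [s [hg _ _ _ _]]]]] := (fr 0).2.
  by exists [::]; rewrite big_nil.
by exists mul, inv.
Qed.

Section HomMod.
Variable R : realType.
Implicit Types (d x y : pot R) (a : pot R -> int).

(* [a] is an integer lift of a continuous homomorphism from the hull to Z/MZ. *)
Definition loc_const_mod d (M : nat) a : Prop :=
  forall x, hull d x -> exists2 dl : R, 0 < dl &
    forall y, hull d y -> supdist_lt x y dl -> (M%:Z %| a x - a y)%Z.

Definition hom_mod d (mul : pot R -> pot R -> pot R) (M : nat) a : Prop :=
  forall x y, hull d x -> hull d y -> (M%:Z %| a (mul x y) - (a x + a y))%Z.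

Lemma hom_mod_shift d mul inv M a : bounded_pot d -> hull_group d mul inv ->
  hom_mod d mul M a -> forall k : int, (M%:Z %| a (sh k d) - k * a (sh 1 d))%Z.
Proof.
move=> bd hg hom.
have step j k : (M%:Z %| a (sh (j + k) d) - (a (sh j d) + a (sh k d)))%Z.
  by rewrite -(hull_group_shiftD hg); apply: hom; exact: hull_shift.
have pos (m : nat) : (M%:Z %| a (sh m%:Z d) - m%:Z * a (sh 1 d))%Z.
  elim: m => [|m IH].
    by have := step 0 0; rewrite addr0 shift0 mul0r subr0 opprD addrA subrr add0r rpredN.
  have -> : a (sh m.+1%:Z d) - m.+1%:Z * a (sh 1 d) =
      (a (sh (m%:Z + 1) d) - (a (sh m%:Z d) + a (sh 1 d))) +
      (a (sh m%:Z d) - m%:Z * a (sh 1 d)).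
    by rewrite -[m.+1]addn1 PoszD; ring.
  by rewrite rpredD.
case=> m; first exact: pos.
have := step (Negz m) m.+1%:Z; rewrite NegzE addNr shift0 => H.
have -> : a (sh (- m.+1%:Z) d) - - m.+1%:Z * a (sh 1 d) =
    - (a d - (a (sh (- m.+1%:Z) d) + a (sh m.+1%:Z d))) + a d -
    (a (sh m.+1%:Z d) - m.+1%:Z * a (sh 1 d)) by ring.
have a0 : (M%:Z %| a d)%Z by have := pos 0%N; rewrite mul0r subr0 shift0.
apply: rpredB (pos _); apply: rpredD a0; by rewrite rpredN.
Qed.

Lemma freq_module_of_hom_mod d mul inv (M : nat) a :
  bounded_pot d -> hull_group d mul inv -> (0 < M)%N ->
  loc_const_mod d M a -> hom_mod d mul M a ->
  freq_module d (2 * pi * (a (sh 1 d))%:~R / M%:R).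
Proof.
move=> bd hg M0 loc hom.
pose th (z : int) : R := 2 * pi * z%:~R / M%:R.
exists mul, inv, (fun x => cos (th (a x))), (fun x => sin (th (a x))); split => //.
- move=> x Hx e e0; have [dl dl0 Hdl] := loc x Hx; exists dl => // y Hy xy.
  by rewrite (cos_sin_2pi_div_mod M0 (Hdl y Hy xy)).1 subrr normr0.
- move=> x Hx e e0; have [dl dl0 Hdl] := loc x Hx; exists dl => // y Hy xy.
  by rewrite (cos_sin_2pi_div_mod M0 (Hdl y Hy xy)).2 subrr normr0.
- move=> x y Hx Hy; rewrite /th.
  have [-> ->] := cos_sin_2pi_div_mod (R := R) M0 (hom x y Hx Hy).
  by rewrite intrD mulrDr mulrDl cosD sinD.
- move=> k; rewrite /th.
  have [-> ->] := cos_sin_2pi_div_mod (R := R) M0 (hom_mod_shift bd hg hom k).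
  suff -> : 2 * pi * (k * a (sh 1 d))%:~R / M%:R =
    k%:~R * (2 * pi * (a (sh 1 d))%:~R / M%:R) :> R by [].
  by rewrite intrM; ring.
Qed.

Lemma chain_dvdn_le (n : nat -> nat) : (forall j, (n j %| n j.+1)%N) ->
  forall i j, (i <= j)%N -> (n i %| n j)%N.
Proof.
move=> H i j /subnKC <-; elim: (j - i)%N => [|k IH]; first by rewrite addn0.
by rewrite addnS; apply: dvdn_trans IH (H _).
Qed.

Lemma zspan_2pi_over_int (n : nat -> nat) (alpha : R) :
  (forall j, (0 < n j)%N) -> (forall j, (n j %| n j.+1)%N) ->
  zspan_2pi_over n alpha -> exists J (B : int), alpha * (n J)%:R = 2 * pi * B%:~R.
Proof.
move=> pos ch [s ->]; elim: s => [|p s [J' [B' HB]]].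
  by exists 0%N, 0; rewrite big_nil mul0r mulr0.
rewrite big_cons; set rest := \sum_(q <- s) _ in HB *.
set J := maxn p.2 J'; exists J.
have /dvdnP [c1 E1] : (n p.2 %| n J)%N by apply: chain_dvdn_le; rewrite ?leq_maxl.
have /dvdnP [c2 E2] : (n J' %| n J)%N by apply: chain_dvdn_le; rewrite ?leq_maxr.
exists (p.1 * c1%:Z + B' * c2%:Z).
have np0 : ((n p.2)%:R : R) != 0 by rewrite pnatr_eq0 -lt0n.
rewrite mulrDl.
have -> : rest * (n J)%:R = rest * (n J')%:R * c2%:R by rewrite E2 natrM; ring.
rewrite HB E1 natrM intrD !intrM /=.
by rewrite -[(c1%:Z)%:~R]/(c1%:R : R) -[(c2%:Z)%:~R]/(c2%:R : R); field.
Qed.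

Lemma eq_2pi_frac_int (u B : int) (r N : nat) : (0 < r)%N ->
  2 * pi * u%:~R / r%:R * N%:R = 2 * pi * B%:~R :> R -> u * N%:Z = B * r%:Z.
Proof.
move=> r0 E; apply: (@intr_inj R); rewrite !intrM /=.
rewrite -[(N%:Z)%:~R]/(N%:R : R) -[(r%:Z)%:~R]/(r%:R : R).
have r0' : (r%:R : R) != 0 by rewrite pnatr_eq0 -lt0n.
have q0 : (2 * pi / r%:R : R) != 0.
  by rewrite !mulf_neq0 ?invr_eq0 // gt_eqF // pi_gt0.
apply: (mulfI q0); rewrite [LHS](_ : _ = 2 * pi * u%:~R / r%:R * N%:R); last by ring.
by rewrite E; field.
Qed.

Lemma hom_mod_dvd_freq_int d mul inv (n : nat -> nat) (M : nat) a :
  bounded_pot d -> hull_group d mul inv -> freq_int_set d n -> (0 < M)%N ->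
  loc_const_mod d M a -> hom_mod d mul M a ->
  (exists k : int, (M%:Z %| 1 - k * a (sh 1 d))%Z) -> exists J, (M %| n J)%N.
Proof.
move=> bd hg [pos ch fr] M0 loc hom [k unit_u].
have /fr/(zspan_2pi_over_int pos ch) [J [B /(eq_2pi_frac_int M0) E]] :=
  freq_module_of_hom_mod bd hg M0 loc hom.
exists J; suff : (M%:Z %| (n J)%:Z)%Z by rewrite dvdzE !absz_nat.
have -> : (n J)%:Z = (1 - k * a (sh 1 d)) * (n J)%:Z + k * (a (sh 1 d) * (n J)%:Z).
  by ring.
rewrite E; apply: rpredD; first by apply: dvdz_mulr.
by apply/dvdz_mull/dvdz_mull/dvdzz.
Qed.

Definition near_shift_dvd d (M : nat) : Prop :=
  exists2 dl : R, 0 < dl & forall k : int, supdist_lt d (sh k d) dl -> (M%:Z %| k)%Z.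

Lemma hom_mod_of_near_shift_dvd d mul inv (M : nat) :
  bounded_pot d -> hull_group d mul inv -> near_shift_dvd d M ->
  exists a, [/\ loc_const_mod d M a, hom_mod d mul M a &
                forall k : int, (M%:Z %| a (sh k d) - k)%Z].
Proof.
move=> bd hg [dl dl0 gap]; have dl2 : 0 < dl / 2 by rewrite divr_gt0.
have cons x (k k' : int) : supdist_lt x (sh k d) (dl / 2) ->
    supdist_lt x (sh k' d) (dl / 2) -> (M%:Z %| k' - k)%Z.
  move=> H H'; apply: gap; rewrite -supdist_shifts.
  exact: supdist_half_trans (supdist_sym H) H'.
case: (@choice _ _ (fun x k => hull d x -> supdist_lt x (sh k d) (dl / 2))) => [x|a aP].
  have [Hx|nHx] := pselect (hull d x); last by exists 0 => /nHx.
  by have [k Hk] := hull_approx Hx dl2; exists k.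
exists a; split.
- move=> x Hx; have [e elt He] := supdist_open (aP x Hx).
  exists (dl / 2 - e); first by rewrite subr_gt0.
  move=> y Hy xy; rewrite -opprB rpredN; apply: cons (aP y Hy).
  by have := supdist_trans (supdist_sym xy) He; rewrite subrK.
- move=> x y Hx Hy; have [e e0 He] := hull_group_cont hg Hx Hy dl2.
  have m0 : 0 < Num.min e (dl / 2) by rewrite lt_min e0.
  have [k1 H1] := hull_approx Hx m0; have [k2 H2] := hull_approx Hy m0.
  have := He _ _ (hull_shift k1 bd) (hull_shift k2 bd) (supdist_minl H1) (supdist_minl H2).
  rewrite (hull_group_shiftD hg) => H3.
  have c1 := cons _ _ _ (aP x Hx) (supdist_minr H1).
  have c2 := cons _ _ _ (aP y Hy) (supdist_minr H2).
  have c3 := cons _ _ _ H3 (aP _ (hull_group_closed hg Hx Hy)).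
  have -> : a (mul x y) - (a x + a y) =
    (a (mul x y) - (k1 + k2)) + (k1 - a x) + (k2 - a y) by ring.
  by apply: rpredD; first apply: rpredD.
- by move=> k; apply: cons (aP _ (hull_shift k bd)); exact: supdist_refl.
Qed.

Lemma near_shift_dvd_freq_int d (n : nat -> nat) (M : nat) :
  bounded_pot d -> freq_int_set d n -> (0 < M)%N -> near_shift_dvd d M ->
  exists J, (M %| n J)%N.
Proof.
move=> bd fis M0 gap; have [mul [inv hg]] := hull_group_of_freq_int_set fis.
have [a [loc hom ash]] := hom_mod_of_near_shift_dvd bd hg gap.
apply: hom_mod_dvd_freq_int bd hg fis M0 loc hom _.
by exists 1; rewrite mul1r -opprB rpredN ash.
Qed.

Lemma freq_int_near_shift_dvd d (n : nat -> nat) J :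
  bounded_pot d -> freq_int_set d n -> near_shift_dvd d (n J).
Proof.
move=> bd [pos _ fr]; have [M1|nJ1] := ltnP 1 (n J); last first.
  exists 1 => // k _; rewrite (_ : n J = 1%N) ?dvd1z //.
  by apply/eqP; rewrite eqn_leq nJ1 pos.
have [|mul [inv [c [s [_ cc _ _ orb]]]]] := (fr (2 * pi / (n J)%:R)).2.
  by exists [:: (1, J)]; rewrite big_cons big_nil addr0 /=; ring.
have c0 : c d = 1 by have := (orb 0).1; rewrite shift0 mul0r cos0.
have gap : 0 < 1 - cos (2 * pi / (n J)%:R) :> R by have := cos_2pi_div_lt1 (R := R) M1; lra.
have [dl dl0 Hdl] := cc d (hull_self bd) _ gap.
exists dl => // k /(Hdl _ (hull_shift k bd)); rewrite c0 (orb k).1 ltr_norml.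
by case/andP=> _ lt; apply/negPn/negP => /(cos_2pi_mul_le (R := R) M1); lra.
Qed.

End HomMod.

Section Periodic.
Variable R : realType.
Implicit Types (d p : pot R).

Lemma shift_fix_mul p (q : nat) : sh q%:Z p = p -> forall m : int, sh (q%:Z * m) p = p.
Proof.
move=> Hq; have pos (m : nat) : sh (q%:Z * m%:Z) p = p.
  elim: m => [|m IH]; first by rewrite mulr0 shift0.
  by rewrite -[m.+1]add1n PoszD mulrDr mulr1 -shiftD IH Hq.
case=> m; first exact: pos.
by rewrite NegzE mulrN -{1}(pos m.+1) shiftD addNr shift0.
Qed.

Lemma periodic_shift_fix p : Defs.periodic p -> exists2 q : nat, (0 < q)%N & sh q%:Z p = p.
Proof.
move=> fp; apply: contrapT => nq.
have back (i j : nat) : (i < j)%N -> sh i%:Z p = sh j%:Z p -> False.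
  move=> ij E; apply: nq; exists (j - i)%N; first by rewrite subn_gt0.
  have := congr1 (sh (- i%:Z)) E; rewrite !shiftD addNr shift0 => {2}->.
  by have -> : ((j - i)%N : int) = - i%:Z + j%:Z by lia.
have inj : {in (fun i : nat => sh i%:Z p) @^-1` orb p &,
    injective (fun i : nat => sh i%:Z p)}%classic.
  move=> i j _ _ /= E; case: (ltngtP i j) => // h.
    by case: (back _ _ h E).
  by case: (back _ _ h (esym E)).
have := finite_preimage inj fp.
have -> : ((fun i : nat => sh i%:Z p) @^-1` orb p = [set: nat])%classic.
  by apply/seteqP; split => // i _; exists i%:Z.
exact: infinite_nat.
Qed.

Lemma limit_periodic_near_period d e : limit_periodic d -> 0 < e ->
  exists2 q : nat, (0 < q)%N & forall m : int, supdist_lt d (sh (q%:Z * m) d) e.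
Proof.
case=> _ lp e0; have e2 : 0 < e / 2 by rewrite divr_gt0.
have [p pp dp] := lp _ e2; have [q q0 Hq] := periodic_shift_fix pp.
exists q => // m; apply: (supdist_half_trans dp).
by rewrite -(shift_fix_mul Hq m) supdist_shift; exact: supdist_sym.
Qed.

End Periodic.

Section Returns.
Variables (R : realType) (d : pot R) (q : nat).

Definition returns (t : int) : Prop :=
  forall e : R, 0 < e -> exists m : int, supdist_lt d (sh (t + q%:Z * m) d) e.

Lemma returnsD t s : returns t -> returns s -> returns (t + s).
Proof.
move=> Ht Hs e e0; have e2 : 0 < e / 2 by rewrite divr_gt0.
have [m1 H1] := Ht _ e2; have [m2 H2] := Hs _ e2; exists (m1 + m2).
have -> : t + s + q%:Z * (m1 + m2) = t + q%:Z * m1 + (s + q%:Z * m2) by ring.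
rewrite -shiftD; apply: (supdist_half_trans H1).
by rewrite supdist_shift.
Qed.

Lemma returnsN t : returns t -> returns (- t).
Proof.
move=> Ht e e0; have [m H] := Ht _ e0; exists (- m).
have -> : - t + q%:Z * - m = - (t + q%:Z * m) by ring.
rewrite -(supdist_shift (t + q%:Z * m)) shiftD addrN shift0.
exact: supdist_sym.
Qed.

Lemma returns_mulq z : returns (q%:Z * z).
Proof. by move=> e e0; exists (- z); rewrite mulrN subrr shift0; exact: supdist_refl. Qed.

Lemma returnsMr t z : returns t -> returns (t * z).
Proof.
move=> Ht; have pos (m : nat) : returns (t * m%:Z).
  elim: m => [|m IH]; first by have := returns_mulq 0; rewrite !mulr0.
  by rewrite -[m.+1]add1n PoszD mulrDr mulr1; exact: returnsD.
by case: z => m; [exact: pos | rewrite NegzE mulrN; exact/returnsN/pos].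
Qed.

Lemma returns_dvd : (0 < q)%N ->
  exists2 r : nat, (0 < r)%N & forall t, returns t <-> (r%:Z %| t)%Z.
Proof.
move=> q0; have exr : exists i, (0 < i)%N && `[< returns i%:Z >].
  by exists q; rewrite q0; apply/asboolP; have := returns_mulq 1; rewrite mulr1.
case: (ex_minnP exr) => r /andP[r0 /asboolP Tr] rmin; exists r => // t; split; last first.
  by case/dvdzP => z ->; rewrite mulrC; exact: returnsMr.
move=> Tt; apply/dvdz_mod0P.
have Tm : returns (t %% r%:Z)%Z.
  have -> : (t %% r%:Z)%Z = t + r%:Z * (- (t %/ r%:Z)%Z).
    by rewrite {2}(divz_eq t r%:Z); ring.
  exact/returnsD/returnsMr.
have rz : r%:Z != 0 by rewrite eqz_nat -lt0n.
move: Tm (modz_ge0 t rz) (ltz_pmod t (r0 : (0 < r%:Z))).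
case: (t %% r%:Z)%Z => [[|j]|j] // Tm _ jlt.
by have := rmin j.+1; rewrite /= asboolT // => /(_ isT); rewrite leqNgt -ltz_nat jlt.
Qed.

Lemma near_shift_dvd_returns (r : nat) : (0 < q)%N ->
  (forall t, returns t <-> (r%:Z %| t)%Z) -> near_shift_dvd d r.
Proof.
move=> q0 rret.
have rq : (r%:Z %| q%:Z)%Z by apply/rret; have := returns_mulq 1; rewrite mulr1.
have [e e0 He] : exists2 e : R, 0 < e & forall b, (b < q)%N ->
    (r%:Z %| b%:Z)%Z \/ forall m : int, ~ supdist_lt d (sh (b%:Z + q%:Z * m) d) e.
  apply: uniform_pos_radius => [b e e' [rb|H] _ le|b _]; [by left | right | ].
    by move=> m /supdist_le/(_ le); exact: H.
  have [|nb] := boolP (r%:Z %| b%:Z)%Z; first by exists 1 => //; left.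
  apply: contrapT => nex; move/negP: nb; apply; apply/rret => e' e'0.
  apply: contrapT => nm; apply: nex; exists e' => //; right => m Pm.
  by apply: nm; exists m.
exists e => // k; have qz : q%:Z != 0 by rewrite eqz_nat -lt0n.
rewrite (divz_eq k q%:Z) addrC mulrC.
move: (modz_ge0 k qz) (ltz_pmod k (q0 : (0 < q%:Z))).
case: (k %% q%:Z)%Z => [b|b] // _; rewrite ltz_nat => bq dk.
have [rb|nb] := He b bq; last by case: (nb _ dk).
by apply: rpredD rb _; apply: dvdz_mulr.
Qed.

End Returns.

Section HullIso.
Variable R : realType.
Implicit Types (d : pot R) (a : pot R -> int) (f : pot R -> pot R).

Lemma freq_int_dvd_near_shift d (n : nat -> nat) e :
  limit_periodic d -> freq_int_set d n -> 0 < e ->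
  exists J, forall k : int, ((n J)%:Z %| k)%Z -> supdist_lt d (sh k d) e.
Proof.
move=> lp fis e0; have e2 : 0 < e / 2 by rewrite divr_gt0.
have [q q0 dq] := limit_periodic_near_period lp e2.
have [r r0 rret] := returns_dvd d q0.
have [J rJ] := near_shift_dvd_freq_int (proj1 lp) fis r0 (near_shift_dvd_returns q0 rret).
exists J => k nJk; have [|m dm] := proj2 (rret k) _ _ e2.
  by apply: dvdz_trans nJk; rewrite dvdzE !absz_nat.
apply: supdist_half_trans dm _.
have := dq (- m); rewrite -(supdist_shift (k + q%:Z * m)) shiftD.
by rewrite mulrN addrK.
Qed.

Lemma loc_const_mod_comp d d' (M : nat) a f :
  (forall x, hull d x -> hull d' (f x)) -> cont_on_to (hull d) (hull d') f ->
  loc_const_mod d' M a -> loc_const_mod d M (a \o f).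
Proof.
move=> fH fc loc x Hx; have [de de0 Hde] := loc _ (fH x Hx).
have [eta eta0 Heta] := fc x Hx de de0.
by exists eta => // y Hy xy; apply: Hde (fH y Hy) (Heta y Hy xy).
Qed.

Lemma hom_mod_comp d d' mul mul' (M : nat) a f :
  (forall x, hull d x -> hull d' (f x)) ->
  (forall x y, hull d x -> hull d y -> f (mul x y) = mul' (f x) (f y)) ->
  hom_mod d' mul' M a -> hom_mod d mul M (a \o f).
Proof. by move=> fH fhom hom x y Hx Hy /=; rewrite fhom //; apply: hom; exact: fH. Qed.

Lemma hull_iso_sym d d' : hull_iso d d' -> hull_iso d' d.
Proof.
case=> mul [inv [mul' [inv' [f [g [hg [hg' [fH [gH [gf [fg [fc [gc fhom]]]]]]]]]]]]].
exists mul', inv', mul, inv, g, f; do 8 (split => //).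
move=> x y Hx Hy; have -> : mul' x y = f (mul (g x) (g y)).
  by rewrite fhom ?fg //; apply: gH.
by rewrite gf //; apply: (hull_group_closed hg); exact: gH.
Qed.

(* A homomorphism from the hull of [d'] onto Z/(n' j)Z pulled back along the
   isomorphism; [sh 1 d] is mapped near [sh k d'] for some [k], which makes its
   value a unit mod n' j. *)
Lemma dvd_of_hull_iso d d' (n n' : nat -> nat) :
  bounded_pot d -> bounded_pot d' -> freq_int_set d n -> freq_int_set d' n' ->
  hull_iso d d' -> forall j, exists i, (n' j %| n i)%N.
Proof.
move=> bd bd' fis fis'.
case=> mul [inv [mul' [inv' [f [g [hg [hg' [fH [gH [_ [fg [fc [_ fhom]]]]]]]]]]]]] j.
have [pos' _ _] := fis'.
have [a [aloc ahom ash]] :=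
  hom_mod_of_near_shift_dvd bd' hg' (freq_int_near_shift_dvd j bd' fis').
pose b := a \o f.
have bloc : loc_const_mod d (n' j) b := loc_const_mod_comp fH fc aloc.
have bhom : hom_mod d mul (n' j) b := hom_mod_comp fH fhom ahom.
apply: (hom_mod_dvd_freq_int bd hg fis (pos' j) bloc bhom).
have Hx : hull d (g (sh 1 d')) by apply/gH/hull_shift.
have [dl dl0 Hdl] := bloc _ Hx; have [k xk] := hull_approx Hx dl0; exists k.
have c0 : b (g (sh 1 d')) = a (sh 1 d') by rewrite /b /= fg //; exact: hull_shift.
have -> : 1 - k * b (sh 1 d) = - (b (g (sh 1 d')) - 1) +
    (b (g (sh 1 d')) - b (sh k d)) + (b (sh k d) - k * b (sh 1 d)) by ring.
apply: rpredD (hom_mod_shift bd hg bhom k); apply: rpredD (Hdl _ (hull_shift k bd) xk).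
by rewrite rpredN c0 ash.
Qed.

End HullIso.

Definition shift_ucont (R : realType) (d d' : pot R) : Prop :=
  forall e : R, 0 < e -> exists2 dl : R, 0 < dl &
    forall k : int, supdist_lt d (sh k d) dl -> supdist_lt d' (sh k d') e.

Definition extends_shift (R : realType) (d d' : pot R) (F : pot R -> pot R) : Prop :=
  forall e : R, 0 < e -> exists2 dl : R, 0 < dl &
    forall x (k : int), hull d x -> supdist_lt x (sh k d) dl ->
      supdist_lt (F x) (sh k d') e.

Section OrbitExtension.
Variables (R : realType) (d d' : pot R) (del : R -> R).
Hypothesis del_gt0 : forall e, 0 < e -> 0 < del e.
Hypothesis del_shift : forall e (k : int), 0 < e ->
  supdist_lt d (sh k d) (del e) -> supdist_lt d' (sh k d') e.

Definition ext_witness x e (k : int) : Prop :=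
  0 < e /\ supdist_lt x (sh k d) (del e / 2).

Lemma ext_witness_near x e e' k k' : ext_witness x e k -> ext_witness x e' k' ->
  del e' <= del e -> supdist_lt (sh k d') (sh k' d') e.
Proof.
move=> [e0 H] [_ H'] le; rewrite supdist_shifts; apply: del_shift e0 _.
rewrite -supdist_shifts; apply: supdist_half_trans (supdist_sym H) _.
by apply: supdist_le H' _; lra.
Qed.

Lemma ext_witness_close x e e' k k' n : ext_witness x e k -> ext_witness x e' k' ->
  d' (n + k) - e < d' (n + k') + e'.
Proof.
move=> w w'; have [e0 _] := w; have [e'0 _] := w'.
have [r rlt Hr] : supdist_lt (sh k d') (sh k' d') (e + e').
  have [le|lt] := leP (del e') (del e).
    by apply: supdist_le (ext_witness_near w w' le) _; lra.
  by apply: supdist_le (supdist_sym (ext_witness_near w' w (ltW lt))) _; lra.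
by have := Hr n; rewrite /Defs.shift ler_norml => /andP[? ?]; lra.
Qed.

(* The extension at [x] is the limit of [sh k d'] as [sh k d] tends to [x]; each
   witness bounds it from both sides, so a supremum of lower bounds avoids limits. *)
Definition ext_lower x (n : int) : set R :=
  [set v | exists e k, ext_witness x e k /\ v = d' (n + k) - e]%classic.

Definition ext_pot x : pot R := fun n => sup (ext_lower x n).

Lemma ext_pot_near x e k n : ext_witness x e k -> `|ext_pot x n - d' (n + k)| <= e.
Proof.
move=> w; have ne : (ext_lower x n !=set0)%classic by exists (d' (n + k) - e); exists e, k.
have ub : ubound (ext_lower x n) (d' (n + k) + e).
  by move=> v [e1 [k1 [w1 ->]]]; exact/ltW/(ext_witness_close _ w1 w).
have le1 : ext_pot x n <= d' (n + k) + e by exact: ge_sup.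
have le2 : d' (n + k) - e <= ext_pot x n.
  by apply: sup_upper_bound; [split => //; exists (d' (n + k) + e) | exists e, k].
by rewrite ler_norml; apply/andP; split; lra.
Qed.

Lemma ext_pot_extends : extends_shift d d' ext_pot.
Proof.
move=> e e0; have e2 : 0 < e / 2 by rewrite divr_gt0.
exists (del (e / 2) / 2); first by rewrite divr_gt0 // del_gt0.
move=> x k _ xk; exists (e / 2); first lra.
by move=> n; apply: ext_pot_near.
Qed.

Lemma hull_ext_pot : bounded_pot d' -> forall x, hull d x -> hull d' (ext_pot x).
Proof.
move=> [B HB] x Hx; split.
  have d1 : 0 < del 1 / 2 by rewrite divr_gt0 // del_gt0.
  have [k xk] := hull_approx Hx d1; exists (B + 1) => n.
  have := ext_pot_near n (conj ltr01 xk); have := HB (n + k).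
  by rewrite !ler_norml => /andP[? ?] /andP[? ?]; apply/andP; split; lra.
move=> e e0; have [dl dl0 H] := ext_pot_extends e0.
have [k xk] := hull_approx Hx dl0.
by exists (sh k d'); [exists k | exact: H].
Qed.

End OrbitExtension.

Lemma hull_extension (R : realType) (d d' : pot R) :
  bounded_pot d' -> shift_ucont d d' ->
  exists F, (forall x, hull d x -> hull d' (F x)) /\ extends_shift d d' F.
Proof.
move=> bd' U.
case: (@choice _ _ (fun e dl => 0 < e -> 0 < dl /\ forall k : int,
    supdist_lt d (sh k d) dl -> supdist_lt d' (sh k d') e)) => [e|del Hdel].
  have [/U [dl dl0 H]|ne] := pselect (0 < e); last by exists 1 => /ne.
  by exists dl => _; split.
have del0 e : 0 < e -> 0 < del e by case/Hdel.
have delS e k : 0 < e -> supdist_lt d (sh k d) (del e) -> supdist_lt d' (sh k d') e.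
  by case/Hdel=> _; apply.
exists (ext_pot d d' del); split; first exact: (hull_ext_pot del0 delS bd').
exact: (ext_pot_extends del0 delS).
Qed.

Section ShiftExtension.
Variables (R : realType) (d d' : pot R) (F : pot R -> pot R).
Hypothesis Fext : extends_shift d d' F.

Lemma extends_shiftE (k : int) : bounded_pot d -> F (sh k d) = sh k d'.
Proof.
move=> bd; apply: supdist_eq => e /Fext [dl dl0 H].
by apply: H; [exact: hull_shift | exact: supdist_refl].
Qed.

Lemma extends_shift_cont : cont_on_to (hull d) (hull d') F.
Proof.
move=> x Hx e e0; have e2 : 0 < e / 2 by rewrite divr_gt0.
have [dl dl0 H] := Fext e2; have dl2 : 0 < dl / 2 by rewrite divr_gt0.
exists (dl / 2) => // y Hy xy; have [k xk] := hull_approx Hx dl2.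
have xk' : supdist_lt x (sh k d) dl by apply: supdist_le xk _; lra.
have yk : supdist_lt y (sh k d) dl by exact: supdist_half_trans (supdist_sym xy) xk.
exact: supdist_half_trans (H _ _ Hx xk') (supdist_sym (H _ _ Hy yk)).
Qed.

Lemma extends_shift_hom mul inv mul' inv' :
  bounded_pot d -> bounded_pot d' -> hull_group d mul inv -> hull_group d' mul' inv' ->
  (forall x, hull d x -> hull d' (F x)) ->
  forall x y, hull d x -> hull d y -> F (mul x y) = mul' (F x) (F y).
Proof.
move=> bd bd' hg hg' FH x y Hx Hy; apply: supdist_eq => e e0.
have e2 : 0 < e / 2 by rewrite divr_gt0.
have [eta eta0 Heta] := hull_group_cont hg' (FH x Hx) (FH y Hy) e2.
have [d1 d10 H1] := Fext eta0.
have [d3 d30 H3] := extends_shift_cont (hull_group_closed hg Hx Hy) e2.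
have [eta2 eta20 Heta2] := hull_group_cont hg Hx Hy d30.
have m0 : 0 < Num.min d1 eta2 by rewrite lt_min d10.
have [k xk] := hull_approx Hx m0; have [l yl] := hull_approx Hy m0.
have := Heta _ _ (hull_shift k bd') (hull_shift l bd')
  (H1 _ _ Hx (supdist_minl xk)) (H1 _ _ Hy (supdist_minl yl)).
rewrite (hull_group_shiftD hg') => A.
have := Heta2 _ _ (hull_shift k bd) (hull_shift l bd) (supdist_minr xk) (supdist_minr yl).
rewrite (hull_group_shiftD hg) => /(H3 _ (hull_shift _ bd)).
by rewrite extends_shiftE // => C; exact: supdist_half_trans C (supdist_sym A).
Qed.

End ShiftExtension.

Lemma extends_shift_inv (R : realType) (d d' : pot R) (F G : pot R -> pot R) :
  bounded_pot d' -> (forall x, hull d x -> hull d' (F x)) ->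
  extends_shift d d' F -> extends_shift d' d G -> forall x, hull d x -> G (F x) = x.
Proof.
move=> bd' FH Fext Gext x Hx; apply: supdist_eq => e e0.
have e2 : 0 < e / 2 by rewrite divr_gt0.
have [eta eta0 Heta] := extends_shift_cont Gext (FH x Hx) e2.
have [dF dF0 HdF] := Fext _ eta0.
have m0 : 0 < Num.min dF (e / 2) by rewrite lt_min dF0.
have [k xk] := hull_approx Hx m0.
have := Heta _ (hull_shift k bd') (HdF _ _ Hx (supdist_minl xk)).
rewrite (extends_shiftE Gext) // => H.
exact: supdist_half_trans H (supdist_sym (supdist_minr xk)).
Qed.

Lemma shift_ucont_of_dvd (R : realType) (d d' : pot R) (n n' : nat -> nat) :
  bounded_pot d -> limit_periodic d' -> freq_int_set d n -> freq_int_set d' n' ->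
  (forall j, exists i, (n' j %| n i)%N) -> shift_ucont d d'.
Proof.
move=> bd lp' fis fis' div e e0.
have [J HJ] := freq_int_dvd_near_shift lp' fis' e0; have [i ni] := div J.
have [dl dl0 Hdl] := freq_int_near_shift_dvd i bd fis.
exists dl => // k /Hdl nik; apply: HJ; apply: (dvdz_trans _ nik).
by rewrite dvdzE !absz_nat.
Qed.

Lemma hull_iso_of_dvd (R : realType) (d d' : pot R) (n n' : nat -> nat) :
  limit_periodic d -> limit_periodic d' -> freq_int_set d n -> freq_int_set d' n' ->
  (forall i, exists j, (n i %| n' j)%N) -> (forall j, exists i, (n' j %| n i)%N) ->
  hull_iso d d'.
Proof.
move=> lp lp' fis fis' div div'; have [bd _] := lp; have [bd' _] := lp'.
have [mul [inv hg]] := hull_group_of_freq_int_set fis.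
have [mul' [inv' hg']] := hull_group_of_freq_int_set fis'.
have [F [FH Fext]] := hull_extension bd' (shift_ucont_of_dvd bd lp' fis fis' div').
have [G [GH Gext]] := hull_extension bd (shift_ucont_of_dvd bd' lp fis' fis div).
exists mul, inv, mul', inv', F, G; do 4 (split => //).
split; first exact: extends_shift_inv bd' FH Fext Gext.
split; first exact: extends_shift_inv bd GH Gext Fext.
split; first exact: extends_shift_cont Fext.
split; first exact: extends_shift_cont Gext.
move=> x y; exact: (@extends_shift_hom _ _ _ _ Fext _ _ _ _ bd bd' hg hg' FH).
Qed.

Theorem theorem2p10 (R : realType) (d d' : int -> R) (n n' : nat -> nat) :
  limit_periodic d -> limit_periodic d' ->
  freq_int_set d n -> freq_int_set d' n' ->
  (hull_iso d d' <->
   ((forall i, exists j, (n i %| n' j)%N) /\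
    (forall j, exists i, (n' j %| n i)%N))).
Proof.
move=> lp lp' fis fis'; have [bd _] := lp; have [bd' _] := lp'.
split=> [iso | [div div']]; last exact: hull_iso_of_dvd lp lp' fis fis' div div'.
split; last exact: dvd_of_hull_iso bd bd' fis fis' iso.
exact: dvd_of_hull_iso bd' bd fis' fis (hull_iso_sym iso).
Qed.
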